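(* Let $\mathcal{C}$ be a path category and let $\mathcal{D}$ be a class of display maps with weak (respectively strong) homotopy $\Pi$-types in $\mathcal{C}$. Let $\mathcal{I}$ be the class of isomorphisms in $\mathcal{C}$. Then $\mathcal{D} \cup \mathcal{I}$ is also a class of display maps with weak (respectively strong) homotopy $\Pi$-types.
   Context: A path category is a category with two classes of maps, fibrations and weak equivalences, such that: fibrations are closed under composition and contain the isomorphisms; pullbacks of fibrations along arbitrary maps exist and are fibrations; there is a terminal object and every map to it is a fibration; isomorphisms are weak equivalences; weak equivalences satisfy 2-out-of-6; every object $X$ has a path object, a factorisation of the diagonal as a weak equivalence $X \to PX$ followed by a fibration $(s,t): PX \to X\times X$; pullbacks of trivial fibrations are trivial fibrations; every trivial fibration has a section. For a fibration $p: Y \to A$ one similarly factors $Y \to Y\times_A Y$ to get a fibrewise path object $P_A Y$, and two maps $m, m': D \to Y$ over $A$ are fibrewise homotopic ($m \simeq_A m'$) if there is $H: D \to P_A Y$ with $(s,t)H = (m,m')$. Homotopy $\Pi$-types: given fibrations $g: C \to B$ and $f: B \to A$, a weak homotopy $\Pi$-type $\Pi_f(g)$ is a fibration $\pi: \Pi \to A$ with a map $\varepsilon: \Pi\times_A B \to C$ satisfying $g\varepsilon = $ the projection to $B$, such that for every map $h: D \to A$ and every $m: D\times_A B \to C$ with $gm$ equal to the projection to $B$, there is $k: D \to \Pi$ with $\pi k = h$ and $\varepsilon\circ(k\times_A B) \simeq_B m$; it is strong if moreover for any $k, k': D \to \Pi$ over $A$ with $\varepsilon(k\times_A B) \simeq_B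 \varepsilon(k'\times_A B)$ we have $k \simeq_A k'$. A class $\mathcal{D}$ of fibrations is a class of display maps with weak (strong) homotopy $\Pi$-types if: every identity map lies in $\mathcal{D}$; the pullback of a map in $\mathcal{D}$ along any map can be found in $\mathcal{D}$ (some pullback lies in $\mathcal{D}$); and for all composable $d: X \to I$, $e: I \to J$ in $\mathcal{D}$ a weak (strong) homotopy $\Pi$-type $\Pi_e(d)$ exists and can be found in $\mathcal{D}$. *)

Set Implicit Arguments.
Unset Strict Implicit.

Record Category := {
  Ob :> Type;
  Hom : Ob -> Ob -> Type;
  idm : forall X, Hom X X;
  comp : forall X Y Z, Hom Y Z -> Hom X Y -> Hom X Z;
  comp_assoc : forall X Y Z W (f : Hom X Y) (g : Hom Y Z) (h : Hom Z W),
      comp h (comp g f) = comp (comp h g) f;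
  comp_id_l : forall X Y (f : Hom X Y), comp (idm Y) f = f;
  comp_id_r : forall X Y (f : Hom X Y), comp f (idm X) = f
}.

Arguments Hom {c} X Y.
Arguments idm {c} X.
Arguments comp {c X Y Z} g f.
Infix "∘" := comp (at level 40, left associativity).

Definition MapClass (C : Category) := forall X Y : C, Hom X Y -> Prop.

Section CatDefs.
Context {C : Category}.

Definition is_iso {X Y : C} (f : Hom X Y) : Prop :=
  exists g : Hom Y X, g ∘ f = idm X /\ f ∘ g = idm Y.

Definition is_terminal (T : C) : Prop :=
  forall X : C, exists! h : Hom X T, True.

(** (P, p1, p2) is a pullback of f : B -> A and g : E -> A;
    p2 : P -> E is "the pullback of f along g". *)
Definition is_pullback {A B E P : C} (f : Hom B A) (g : Hom E A)
  (p1 : Hom P B) (p2 : Hom P E) : Prop :=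
  f ∘ p1 = g ∘ p2 /\
  forall (D : C) (u : Hom D B) (v : Hom D E), f ∘ u = g ∘ v ->
    exists! h : Hom D P, p1 ∘ h = u /\ p2 ∘ h = v.

Definition is_product {X Y P : C} (p1 : Hom P X) (p2 : Hom P Y) : Prop :=
  forall (D : C) (u : Hom D X) (v : Hom D Y),
    exists! h : Hom D P, p1 ∘ h = u /\ p2 ∘ h = v.

End CatDefs.

Definition is_path_category (C : Category) (Fib Weq : MapClass C) : Prop :=
  (forall (X Y Z : C) (f : Hom X Y) (g : Hom Y Z), Fib _ _ f -> Fib _ _ g -> Fib _ _ (g ∘ f)) /\
  (forall (X Y : C) (f : Hom X Y), is_iso f -> Fib _ _ f) /\
  (forall (A B E : C) (f : Hom B A) (g : Hom E A), Fib _ _ f ->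
     exists (P : C) (p1 : Hom P B) (p2 : Hom P E), is_pullback f g p1 p2) /\
  (forall (A B E P : C) (f : Hom B A) (g : Hom E A) (p1 : Hom P B) (p2 : Hom P E),
     Fib _ _ f -> is_pullback f g p1 p2 -> Fib _ _ p2) /\
  (exists T : C, is_terminal T /\ forall (X : C) (h : Hom X T), Fib _ _ h) /\
  (forall (X Y : C) (f : Hom X Y), is_iso f -> Weq _ _ f) /\
  (forall (A B E D : C) (f : Hom A B) (g : Hom B E) (h : Hom E D),
     Weq _ _ (g ∘ f) -> Weq _ _ (h ∘ g) ->
     Weq _ _ f /\ Weq _ _ g /\ Weq _ _ h /\ Weq _ _ (h ∘ g ∘ f)) /\
  (forall X : C, exists (XX : C) (pr1 pr2 : Hom XX X) (PX : C)
       (r : Hom X PX) (st : Hom PX XX),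
     is_product pr1 pr2 /\ Weq _ _ r /\ Fib _ _ st /\
     pr1 ∘ st ∘ r = idm X /\ pr2 ∘ st ∘ r = idm X) /\
  (forall (A B E P : C) (f : Hom B A) (g : Hom E A) (p1 : Hom P B) (p2 : Hom P E),
     Fib _ _ f -> Weq _ _ f -> is_pullback f g p1 p2 -> Fib _ _ p2 /\ Weq _ _ p2) /\
  (forall (X Y : C) (f : Hom X Y), Fib _ _ f -> Weq _ _ f ->
     exists s : Hom Y X, f ∘ s = idm Y).

Unset Implicit Arguments.
Section PiDefs.
Context {C : Category} (Fib Weq : MapClass C).

(** Fibrewise homotopy m ≃_A m' for maps m m' : D -> Y over p : Y -> A:
    there is a fibrewise path object Y -> P_A Y -> Y ×_A Y (a weak
    equivalence followed by a fibration factoring the diagonal) and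
    H : D -> P_A Y with (s,t) H = (m, m'). *)
Definition fhtpy {Y A D : C} (p : Hom Y A) (m m' : Hom D Y) : Prop :=
  exists (YY : C) (y1 y2 : Hom YY Y) (PY : C) (r : Hom Y PY) (st : Hom PY YY)
         (H : Hom D PY),
    is_pullback p p y1 y2 /\ Weq _ _ r /\ Fib _ _ st /\
    y1 ∘ st ∘ r = idm Y /\ y2 ∘ st ∘ r = idm Y /\
    y1 ∘ st ∘ H = m /\ y2 ∘ st ∘ H = m'.

(** Weak homotopy Pi-type Pi_f(g) for g : E -> B, f : B -> A:
    pi : Pi -> A, a pullback (PB, q1 : PB -> Pi, q2 : PB -> B) of pi and f
    (i.e. PB = Pi ×_A B), and eps : PB -> E with g eps = q2. *)
Definition weak_Pi {A B E Pi PB : C} (f : Hom B A) (g : Hom E B)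
  (pi : Hom Pi A) (q1 : Hom PB Pi) (q2 : Hom PB B) (eps : Hom PB E) : Prop :=
  Fib _ _ pi /\ is_pullback pi f q1 q2 /\ g ∘ eps = q2 /\
  forall (D : C) (h : Hom D A) (DB : C) (d1 : Hom DB D) (d2 : Hom DB B),
    is_pullback h f d1 d2 ->
    forall m : Hom DB E, g ∘ m = d2 ->
      exists k : Hom D Pi, pi ∘ k = h /\
        forall kB : Hom DB PB, q1 ∘ kB = k ∘ d1 -> q2 ∘ kB = d2 ->
          fhtpy g (eps ∘ kB) m.

Definition strong_Pi {A B E Pi PB : C} (f : Hom B A) (g : Hom E B)
  (pi : Hom Pi A) (q1 : Hom PB Pi) (q2 : Hom PB B) (eps : Hom PB E) : Prop :=
  weak_Pi f g pi q1 q2 eps /\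
  forall (D : C) (h : Hom D A) (DB : C) (d1 : Hom DB D) (d2 : Hom DB B),
    is_pullback h f d1 d2 ->
    forall k k' : Hom D Pi, pi ∘ k = h -> pi ∘ k' = h ->
    forall kB kB' : Hom DB PB,
      q1 ∘ kB = k ∘ d1 -> q2 ∘ kB = d2 ->
      q1 ∘ kB' = k' ∘ d1 -> q2 ∘ kB' = d2 ->
      fhtpy g (eps ∘ kB) (eps ∘ kB') -> fhtpy pi k k'.

Definition homotopy_Pi (strong : bool) {A B E Pi PB : C} (f : Hom B A)
  (g : Hom E B) (pi : Hom Pi A) (q1 : Hom PB Pi) (q2 : Hom PB B)
  (eps : Hom PB E) : Prop :=
  if strong then strong_Pi f g pi q1 q2 eps else weak_Pi f g pi q1 q2 eps.

Definition display_class (strong : bool) (Dm : MapClass C) : Prop :=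
  (forall (X Y : C) (d : Hom X Y), Dm _ _ d -> Fib _ _ d) /\
  (forall X : C, Dm _ _ (idm X)) /\
  (forall (I X J : C) (d : Hom X I) (u : Hom J I), Dm _ _ d ->
     exists (P : C) (p1 : Hom P X) (p2 : Hom P J),
       is_pullback d u p1 p2 /\ Dm _ _ p2) /\
  (forall (X I J : C) (d : Hom X I) (e : Hom I J), Dm _ _ d -> Dm _ _ e ->
     exists (Pi PB : C) (pi : Hom Pi J) (q1 : Hom PB Pi) (q2 : Hom PB I)
            (eps : Hom PB X),
       homotopy_Pi strong e d pi q1 q2 eps /\ Dm _ _ pi).

End PiDefs.


(* A pullback of an isomorphism is an isomorphism and can be chosen to be an
   identity, which is a display map. For d : X -> I and e : I -> J: if d is an
   isomorphism, the identity of J is a strong Pi_e(d) with counit d^-1; if e is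
   an isomorphism, the pullback of d along e^-1 is a strong Pi_e(d) with the
   projection to X as counit, and homotopies over it are homotopies over d
   transported along isomorphisms. The one non-formal input is reflexivity of
   fibrewise homotopy over a display map d: the weak Pi-type Pi_id(d) yields
   some homotopy over d, hence a fibrewise path object for d. *)

Ltac reassoc := repeat rewrite <- comp_assoc; reflexivity.

Section Isomorphisms.
Context {C : Category}.

Lemma is_iso_idm (X : C) : is_iso (idm X).
Proof. exists (idm X); split; apply comp_id_l. Qed.

Lemma comp_cancel {X Y Z : C} (f : Hom X Y) (g : Hom Y X) (h : Hom Z X) :
  g ∘ f = idm X -> g ∘ (f ∘ h) = h.
Proof. intros Hgf; rewrite comp_assoc, Hgf; apply comp_id_l. Qed.

Lemma comp_cancel_r {X Y Z : C} (f : Hom X Y) (g : Hom Y X) (h : Hom X Z) :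
  g ∘ f = idm X -> h ∘ g ∘ f = h.
Proof. intros Hgf; rewrite <- comp_assoc, Hgf; apply comp_id_r. Qed.

Lemma is_pullback_sym {A B E P : C} (f : Hom B A) (g : Hom E A)
  (p1 : Hom P B) (p2 : Hom P E) :
  is_pullback f g p1 p2 -> is_pullback g f p2 p1.
Proof.
  intros [Hcomm Huniv]; split; [symmetry; exact Hcomm|].
  intros D u v Huv.
  destruct (Huniv D v u (eq_sym Huv)) as [h [[H1 H2] Hh]].
  exists h; split; [split; assumption|].
  intros x [X1 X2]; apply Hh; split; assumption.
Qed.

Lemma is_pullback_along_iso {A B E : C} (f : Hom B A) (g : Hom E A)
  (gi : Hom A E) :
  g ∘ gi = idm A -> gi ∘ g = idm E -> is_pullback f g (idm B) (gi ∘ f).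
Proof.
  intros Hg1 Hg2; split.
  - rewrite comp_cancel, comp_id_r by exact Hg1; reflexivity.
  - intros D u v Huv; exists u; split; [split|].
    + apply comp_id_l.
    + rewrite <- comp_assoc, Huv; apply comp_cancel, Hg2.
    + intros x [X1 _]; rewrite comp_id_l in X1; symmetry; exact X1.
Qed.

Lemma is_pullback_idm_r {A B : C} (f : Hom B A) :
  is_pullback f (idm A) (idm B) f.
Proof.
  pose proof (is_pullback_along_iso f (idm A) (idm A)) as Hpb.
  rewrite (comp_id_l f) in Hpb; apply Hpb; apply comp_id_l.
Qed.

Lemma iso_pullback {A B E P : C} (f : Hom B A) (g : Hom E A)
  (p1 : Hom P B) (p2 : Hom P E) :
  is_iso g -> is_pullback f g p1 p2 -> is_iso p1.
Proof.
  intros [gi [Hg1 Hg2]] [Hcomm Huniv].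
  destruct (Huniv B (idm B) (gi ∘ f)) as [s [[S1 S2] _]].
  { rewrite comp_id_r, comp_cancel by exact Hg2; reflexivity. }
  exists s; split; [|exact S1].
  destruct (Huniv P p1 p2 Hcomm) as [x [_ Hx]].
  transitivity x; [symmetry|]; apply Hx; split; try apply comp_id_r.
  - rewrite comp_assoc, S1; apply comp_id_l.
  - rewrite comp_assoc, S2, <- comp_assoc, Hcomm; apply comp_cancel, Hg1.
Qed.

Lemma is_pullback_postcomp_mono {A A' B E P : C} (f : Hom B A) (g : Hom E A)
  (p1 : Hom P B) (p2 : Hom P E) (psi : Hom A A') (psii : Hom A' A) :
  psii ∘ psi = idm A ->
  is_pullback f g p1 p2 -> is_pullback (psi ∘ f) (psi ∘ g) p1 p2.
Proof.
  intros Hpsi [Hcomm Huniv]; split.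
  - rewrite <- !comp_assoc, Hcomm; reflexivity.
  - intros D u v Huv; apply Huniv.
    rewrite <- !comp_assoc in Huv.
    rewrite <- (comp_cancel psi psii (f ∘ u) Hpsi), Huv; apply comp_cancel, Hpsi.
Qed.

Lemma is_pullback_precomp_iso {A B B' E P : C} (f : Hom B A) (g : Hom E A)
  (p1 : Hom P B) (p2 : Hom P E) (phi : Hom B' B) (phii : Hom B B') :
  phii ∘ phi = idm B' -> phi ∘ phii = idm B ->
  is_pullback f g p1 p2 -> is_pullback (f ∘ phi) g (phii ∘ p1) p2.
Proof.
  intros Hphi1 Hphi2 [Hcomm Huniv]; split.
  - rewrite <- comp_assoc, comp_cancel by exact Hphi2; exact Hcomm.
  - intros D u v Huv.
    destruct (Huniv D (phi ∘ u) v) as [h [[H1 H2] Hh]];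
      [rewrite comp_assoc; exact Huv|].
    exists h; split; [split; [|exact H2]|].
    + rewrite <- comp_assoc, H1; apply comp_cancel, Hphi1.
    + intros x [X1 X2]; apply Hh; split; [|exact X2].
      rewrite <- X1, <- comp_assoc; symmetry; apply comp_cancel, Hphi2.
Qed.

End Isomorphisms.

Section Homotopy.
Context {C : Category} (Fib Weq : MapClass C) (HC : is_path_category Fib Weq).

Lemma fib_iso {X Y : C} (f : Hom X Y) : is_iso f -> Fib _ _ f.
Proof. destruct HC as (_ & Hfib & _); apply Hfib. Qed.

Lemma weq_iso {X Y : C} (f : Hom X Y) : is_iso f -> Weq _ _ f.
Proof. destruct HC as (_ & _ & _ & _ & _ & Hweq & _); apply Hweq. Qed.

(* 2-out-of-6 applied to p, p^-1 and r ∘ p. *)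
Lemma weq_comp_iso {X Y Z : C} (r : Hom Y Z) (p : Hom X Y) :
  Weq _ _ r -> is_iso p -> Weq _ _ (r ∘ p).
Proof.
  intros Hr [pi [Hp1 Hp2]].
  destruct HC as (_ & _ & _ & _ & _ & _ & H2of6 & _).
  apply (H2of6 _ _ _ _ p pi (r ∘ p)).
  - rewrite Hp1; apply weq_iso, is_iso_idm.
  - rewrite <- comp_assoc, Hp2, comp_id_r; exact Hr.
Qed.

Lemma fhtpy_comp_r {Y A D D' : C} (p : Hom Y A) (m m' : Hom D Y)
  (f : Hom D' D) :
  fhtpy Fib Weq p m m' -> fhtpy Fib Weq p (m ∘ f) (m' ∘ f).
Proof.
  intros (YY & y1 & y2 & PY & r & st & H & Hpb & Hr & Hst & E1 & E2 & E3 & E4).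
  exists YY, y1, y2, PY, r, st, (H ∘ f).
  refine (conj Hpb (conj Hr (conj Hst (conj E1 (conj E2 (conj _ _))))));
    rewrite comp_assoc; congruence.
Qed.

(* Any homotopy over p comes with a fibrewise path object for p,
   whose reflexivity map r gives constant homotopies. *)
Lemma fhtpy_refl {Y A D D' : C} (p : Hom Y A) (m m' : Hom D Y)
  (n : Hom D' Y) :
  fhtpy Fib Weq p m m' -> fhtpy Fib Weq p n n.
Proof.
  intros (YY & y1 & y2 & PY & r & st & H & Hpb & Hr & Hst & E1 & E2 & E3 & E4).
  exists YY, y1, y2, PY, r, st, (r ∘ n).
  refine (conj Hpb (conj Hr (conj Hst (conj E1 (conj E2 (conj _ _))))));
    rewrite comp_assoc; [rewrite E1 | rewrite E2]; apply comp_id_l.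
Qed.

Lemma fhtpy_iso {Y A D : C} (p : Hom Y A) (m : Hom D Y) :
  is_iso p -> fhtpy Fib Weq p m m.
Proof.
  intros Hp.
  exists Y, (idm Y), (idm Y), Y, (idm Y), (idm Y), m.
  repeat split; try (rewrite !comp_id_l; reflexivity);
    try apply weq_iso; try apply fib_iso; try apply is_iso_idm.
  intros D' u v Huv.
  destruct Hp as [pi [Hp1 _]].
  assert (u = v) as <- by (rewrite <- (comp_cancel p pi u Hp1), Huv; apply comp_cancel, Hp1).
  exists u; split; [split; apply comp_id_l|].
  intros x [X1 _]; rewrite comp_id_l in X1; symmetry; exact X1.
Qed.

Lemma fhtpy_postcomp_mono {Y A A' D : C} (p : Hom Y A) (psi : Hom A A')
  (psii : Hom A' A) (m m' : Hom D Y) :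
  psii ∘ psi = idm A ->
  fhtpy Fib Weq p m m' -> fhtpy Fib Weq (psi ∘ p) m m'.
Proof.
  intros Hpsi (YY & y1 & y2 & PY & r & st & H & Hpb & Hrest).
  exists YY, y1, y2, PY, r, st, H.
  split; [exact (is_pullback_postcomp_mono _ _ _ _ _ _ Hpsi Hpb)|exact Hrest].
Qed.

Lemma fhtpy_precomp_iso {Y Y' A D : C} (p : Hom Y A) (phi : Hom Y' Y)
  (phii : Hom Y Y') (m m' : Hom D Y) :
  phii ∘ phi = idm Y' -> phi ∘ phii = idm Y ->
  fhtpy Fib Weq p m m' -> fhtpy Fib Weq (p ∘ phi) (phii ∘ m) (phii ∘ m').
Proof.
  intros Hphi1 Hphi2
    (YY & y1 & y2 & PY & r & st & H & Hpb & Hr & Hst & E1 & E2 & E3 & E4).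
  exists YY, (phii ∘ y1), (phii ∘ y2), PY, (r ∘ phi), st, H.
  refine (conj _ (conj _ (conj Hst (conj _ (conj _ (conj _ _)))))).
  - apply is_pullback_sym, is_pullback_precomp_iso; try assumption.
    apply is_pullback_sym, is_pullback_precomp_iso; assumption.
  - apply weq_comp_iso; [exact Hr|exists phii; split; assumption].
  - transitivity (phii ∘ (y1 ∘ st ∘ r) ∘ phi); [reassoc|].
    rewrite E1, comp_id_r; exact Hphi1.
  - transitivity (phii ∘ (y2 ∘ st ∘ r) ∘ phi); [reassoc|].
    rewrite E2, comp_id_r; exact Hphi1.
  - transitivity (phii ∘ (y1 ∘ st ∘ H)); [reassoc|now rewrite E3].
  - transitivity (phii ∘ (y2 ∘ st ∘ H)); [reassoc|now rewrite E4].
Qed.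

Section PiTypes.
Context {A B E Pi PB : C} (f : Hom B A) (g : Hom E B) (pi : Hom Pi A)
  (q1 : Hom PB Pi) (q2 : Hom PB B) (eps : Hom PB E).

Lemma homotopy_Pi_weak (strong : bool) :
  homotopy_Pi Fib Weq strong f g pi q1 q2 eps -> weak_Pi Fib Weq f g pi q1 q2 eps.
Proof. destruct strong; [intros [Hweak _]|intros Hweak]; exact Hweak. Qed.

Lemma strong_Pi_homotopy_Pi (strong : bool) :
  strong_Pi Fib Weq f g pi q1 q2 eps -> homotopy_Pi Fib Weq strong f g pi q1 q2 eps.
Proof. destruct strong; [intros Hstrong|intros [Hweak _]]; assumption. Qed.

End PiTypes.

Lemma weak_Pi_idm_fhtpy_refl {X I Pi PB D : C} (d : Hom X I) (pi : Hom Pi I)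
  (q1 : Hom PB Pi) (q2 : Hom PB I) (eps : Hom PB X) (m : Hom D X) :
  weak_Pi Fib Weq (idm I) d pi q1 q2 eps -> fhtpy Fib Weq d m m.
Proof.
  intros (_ & [_ Huniv] & _ & Hweak).
  destruct (Hweak X d X (idm X) d (is_pullback_idm_r d) (idm X) (comp_id_r d))
    as [k [Hk Hhtpy]].
  destruct (Huniv X k d) as [kB [[K1 K2] _]]; [rewrite comp_id_l; exact Hk|].
  apply (fhtpy_refl d (eps ∘ kB) (idm X)), Hhtpy; [rewrite comp_id_r|]; assumption.
Qed.

Lemma display_class_fhtpy_refl (strong : bool) (Dm : MapClass C) {X I D : C}
  (d : Hom X I) (m : Hom D X) :
  display_class Fib Weq strong Dm -> Dm _ _ d -> fhtpy Fib Weq d m m.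
Proof.
  intros (_ & Hid & _ & HPi) Hd.
  destruct (HPi X I I d (idm I) Hd (Hid I))
    as (Pi & PB & pi & q1 & q2 & eps & HPi_d & _).
  exact (weak_Pi_idm_fhtpy_refl d pi q1 q2 eps m (homotopy_Pi_weak _ _ _ _ _ _ _ HPi_d)).
Qed.

Lemma strong_Pi_iso_family {X I J : C} (e : Hom I J) (d : Hom X I)
  (di : Hom I X) :
  di ∘ d = idm X -> d ∘ di = idm I ->
  strong_Pi Fib Weq e d (idm J) e (idm I) di.
Proof.
  intros Hd1 Hd2; split; [split; [|split; [|split]]|].
  - apply fib_iso, is_iso_idm.
  - apply is_pullback_sym, is_pullback_idm_r.
  - exact Hd2.
  - intros D h DB d1 d2 _ m Hm; exists h; split; [apply comp_id_l|].
    intros kB _ HkB; rewrite comp_id_l in HkB; subst kB.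
    rewrite <- Hm, comp_cancel by exact Hd1.
    apply fhtpy_iso; exists di; split; assumption.
  - intros D h DB d1 d2 _ k k' Hk Hk' _ _ _ _ _ _ _.
    rewrite comp_id_l in Hk, Hk'; subst k k'.
    apply fhtpy_iso, is_iso_idm.
Qed.

Lemma strong_Pi_iso_base {X I J P : C} (e : Hom I J) (ei : Hom J I)
  (d : Hom X I) (p1 : Hom P X) (p2 : Hom P J) :
  ei ∘ e = idm I -> e ∘ ei = idm J ->
  is_pullback d ei p1 p2 -> Fib _ _ p2 ->
  (forall (D : C) (m : Hom D X), fhtpy Fib Weq d m m) ->
  strong_Pi Fib Weq e d p2 (idm P) (ei ∘ p2) p1.
Proof.
  intros He1 He2 Hpb Hp2 Hrefl.
  assert (He : is_iso e) by (exists ei; split; assumption).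
  assert (Hei : is_iso ei) by (exists e; split; assumption).
  destruct (iso_pullback _ _ _ _ Hei Hpb) as [p1i [Hp1 Hp1']].
  assert (Ep2 : p2 = e ∘ d ∘ p1).
  { rewrite <- comp_assoc, (proj1 Hpb), comp_cancel by exact He2; reflexivity. }
  split; [split; [exact Hp2|split; [|split]]|].
  - apply is_pullback_along_iso; assumption.
  - exact (proj1 Hpb).
  - intros D h DB d1 d2 HpbD m Hm.
    destruct (iso_pullback _ _ _ _ He HpbD) as [d1i [Hd1 Hd1']].
    exists (p1i ∘ m ∘ d1i); split.
    + rewrite Ep2; transitivity (e ∘ (d ∘ m) ∘ d1i).
      * transitivity (e ∘ d ∘ (p1 ∘ p1i) ∘ m ∘ d1i); [reassoc|].
        rewrite Hp1', comp_id_r; reassoc.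
      * rewrite Hm, <- (proj1 HpbD); apply comp_cancel_r, Hd1'.
    + intros kB HkB _; rewrite comp_id_l in HkB; subst kB.
      replace (p1 ∘ (p1i ∘ m ∘ d1i ∘ d1)) with m; [apply Hrefl|].
      rewrite <- !comp_assoc, Hd1, comp_id_r, comp_cancel by exact Hp1'.
      reflexivity.
  - intros D h DB d1 d2 HpbD k k' _ _ kB kB' HkB _ HkB' _ Hhtpy.
    rewrite comp_id_l in HkB, HkB'; subst kB kB'.
    destruct (iso_pullback _ _ _ _ He HpbD) as [d1i [_ Hd1']].
    apply (fhtpy_comp_r _ _ _ d1i) in Hhtpy.
    rewrite <- !comp_assoc, !Hd1', !comp_id_r in Hhtpy.
    apply (fhtpy_postcomp_mono _ e ei _ _ He1) in Hhtpy.
    apply (fhtpy_precomp_iso _ p1 p1i _ _ Hp1 Hp1') in Hhtpy.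
    rewrite !(comp_cancel p1 p1i _ Hp1) in Hhtpy.
    rewrite Ep2; exact Hhtpy.
Qed.

End Homotopy.

Theorem lemma6p3 (C : Category) (Fib Weq : MapClass C)
  (HC : is_path_category Fib Weq) (strong : bool) (Dm : MapClass C)
  (HD : display_class Fib Weq strong Dm) :
  display_class Fib Weq strong (fun X Y f => Dm X Y f \/ is_iso f).
Proof.
  pose proof HD as (HDfib & HDid & HDpb & HDpi).
  split; [|split; [|split]].
  - intros X Y d [Hd|Hd]; [exact (HDfib _ _ _ Hd)|exact (fib_iso _ _ HC _ Hd)].
  - intros X; left; apply HDid.
  - intros I X J d u [Hd|[di [Hd1 Hd2]]].
    + destruct (HDpb I X J d u Hd) as (P & p1 & p2 & Hpb & Hp2).
      exists P, p1, p2; split; [exact Hpb|left; exact Hp2].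
    + exists J, (di ∘ u), (idm J); split; [|left; apply HDid].
      apply is_pullback_sym, is_pullback_along_iso; assumption.
  - intros X I J d e [Hd|[di [Hd1 Hd2]]] He.
    + destruct He as [He|[ei [He1 He2]]].
      * destruct (HDpi X I J d e Hd He)
          as (Pi & PB & pi & q1 & q2 & eps & HPi & Hpi).
        exists Pi, PB, pi, q1, q2, eps; split; [exact HPi|left; exact Hpi].
      * destruct (HDpb I X J d ei Hd) as (P & p1 & p2 & Hpb & Hp2).
        exists P, P, p2, (idm P), (ei ∘ p2), p1; split; [|left; exact Hp2].
        apply strong_Pi_homotopy_Pi, strong_Pi_iso_base; auto.
        intros D m; exact (display_class_fhtpy_refl Fib Weq strong Dm d m HD Hd).
    + exists J, I, (idm J), e, (idm I), di; split; [|left; apply HDid].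
      apply strong_Pi_homotopy_Pi, strong_Pi_iso_family; assumption.
Qed.
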